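(* A set $F$ of pairs $(K,a)$ ($K$ a graph, $a\in\mathbb{Z}_2^{*V(K)}$, taken up to isomorphism) is an easy full graph fibration if and only if $F(K)$ is a normal subgroup of $\mathbb{Z}_2^{*V(K)}$ for every graph $K$ and, for every graph homomorphism $\phi\colon H\to K$ between any two graphs, $\phi(F(H))\subset F(K)$.
   Context: Graphs are finite, undirected, without multiple edges, loops allowed, considered up to isomorphism; $N_k$ is the edgeless graph on $k$ vertices. A graph homomorphism is a vertex map sending edges (including loops) to edges. For a set $V$, $\mathbb{Z}_2^{*V}$ is the group generated by $V$ subject to $v^2=e$; a map $\phi\colon V\to V'$ induces a homomorphism $\mathbb{Z}_2^{*V}\to\mathbb{Z}_2^{*V'}$, also denoted $\phi$. Pairs are taken up to the equivalence $(K,a)\equiv(K',\phi(a))$ for isomorphisms $\phi\colon K\to K'$, and $F(K):=\{a\mid (K,a)\in F\}$. For a partition $\pi$ of $V(K)$, the quotient $K/\pi$ has the blocks as vertices with an edge between two (possibly equal) blocks iff $K$ has an edge between some of their elements; $q_\pi\colon V(K)\to V(K/\pi)$ the quotient map. A vertex overlap of graphs $K,H$ is a subset $f\subset V(K)\times V(H)$ in which each vertex occurs at most once; $K\cup_fH$ is the quotient of $K\sqcup H$ identifying $v$ with $w$ for $(v,w)\in f$; $f_K,f_H$ are the induced maps into $V(K\cup_fH)$. A graph fibration is such a set $F$ with $(N_0,e),(N_1,e)\in F$ and: (F1) each $F(K)$ is empty or a normal subgroup; (F2) $\phi(F(K))=F(K)$ for every automorphism $\phi$ of $K$; (F3) if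 $(K,a),(H,b)\in F$ and $f$ is a vertex overlap, then $(K\cup_fH,f_K(a)f_H(b))\in F$. It is full if $F(K)\ne\emptyset$ for all graphs $K$, and easy if (F4): for $F(K)\neq\emptyset$ and every partition $\pi$ of $V(K)$, $q_\pi(F(K))\subset F(K/\pi)$. *)

From mathcomp Require Import all_boot.
Set Implicit Arguments. Unset Strict Implicit. Unset Printing Implicit Defensive.

(* ---------- Graphs: finite vertex type, symmetric adjacency (loops allowed) *)
Record graph := Graph { vert : finType; adj : rel vert; adj_sym : symmetric adj }.

Lemma nil_rel_sym k : symmetric (fun _ _ : 'I_k => false). Proof. by []. Qed.
Definition N_ (k : nat) : graph := @Graph 'I_k (fun _ _ => false) (@nil_rel_sym k).

Definition ghom (H K : graph) (phi : vert H -> vert K) : Prop :=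
  forall x y, adj x y -> adj (phi x) (phi y).
Definition giso (H K : graph) (phi : vert H -> vert K) : Prop :=
  bijective phi /\ forall x y, adj (phi x) (phi y) = adj x y.
Definition gaut (K : graph) (phi : vert K -> vert K) : Prop := giso phi.

(* ---------- The group Z_2^{*V}: reduced words (no two equal consecutive letters) *)
Definition reducedw (V : eqType) (s : seq V) : bool := sorted (fun x y => x != y) s.
Definition word (V : eqType) := {s : seq V | reducedw s}.

Definition push (V : eqType) (x : V) (s : seq V) : seq V :=
  if s is y :: s' then (if x == y then s' else x :: s) else [:: x].

Lemma push_reduced (V : eqType) (x : V) s : reducedw s -> reducedw (push x s).
Proof.
case: s => [|y s] //= Hs.
case: eqP => [_|/eqP Hxy]; first by case: s Hs => //= z s /andP[].
by rewrite /reducedw /= Hxy.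
Qed.

Lemma foldr_push_reduced (V : eqType) (s t : seq V) :
  reducedw t -> reducedw (foldr (@push V) t s).
Proof. by elim: s => //= x s IH Ht; apply: push_reduced; apply: IH. Qed.

Definition wone (V : eqType) : word V := exist _ [::] (erefl true).
Definition wmul (V : eqType) (a b : word V) : word V :=
  exist _ (foldr (@push V) (sval b) (sval a)) (foldr_push_reduced (sval a) (svalP b)).
Lemma rev_reduced (V : eqType) (s : seq V) : reducedw s -> reducedw (rev s).
Proof.
rewrite /reducedw rev_sorted; case: s => //= x s.
by rewrite (@eq_path _ _ (fun x y => x != y)) // => u v /=; rewrite eq_sym.
Qed.
Definition winv (V : eqType) (a : word V) : word V :=
  exist _ (rev (sval a)) (rev_reduced (svalP a)).

Definition wmap_seq (V V' : eqType) (phi : V -> V') (s : seq V) : seq V' :=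
  foldr (fun x acc => push (phi x) acc) [::] s.
Lemma wmap_seq_reduced (V V' : eqType) (phi : V -> V') s : reducedw (wmap_seq phi s).
Proof. by elim: s => //= x s IH; apply: push_reduced. Qed.
Definition wmap (V V' : eqType) (phi : V -> V') (a : word V) : word V' :=
  exist _ (wmap_seq phi (sval a)) (wmap_seq_reduced phi (sval a)).

Definition normal_subgroup (V : eqType) (S : word V -> Prop) : Prop :=
  [/\ S (wone V),
      (forall a b, S a -> S b -> S (wmul a b)),
      (forall a, S a -> S (winv a)) &
      (forall g a, S a -> S (wmul (wmul (winv g) a) g))].

Section Quotient.
Variables (K : graph) (P : {set {set vert K}}) (hP : partition P [set: vert K]).

Definition qvert : finType := {B : {set vert K} | B \in P}.
Definition qadj : rel qvert :=
  fun B C => [exists x, [exists y, [&& x \in sval B, y \in sval C & adj x y]]].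
Lemma qadj_sym : symmetric qadj.
Proof.
move=> B C; apply/existsP/existsP => -[x /existsP[y /and3P[Hx Hy Hxy]]];
  by exists y; apply/existsP; exists x; rewrite Hx Hy adj_sym.
Qed.
Definition quot : graph := @Graph qvert qadj qadj_sym.

Lemma pblock_in (x : vert K) : pblock P x \in P.
Proof. by apply: pblock_mem; case/and3P: hP => /eqP -> _ _; rewrite inE. Qed.
Definition qmap (x : vert K) : vert quot := exist _ (pblock P x) (pblock_in x).
End Quotient.

Record overlap (K H : graph) := Overlap {
  ovl : {set vert K * vert H};
  ovl_ok : forall p q, p \in ovl -> q \in ovl -> (p.1 == q.1) = (p.2 == q.2) }.

Section Glue.
Variables (K H : graph) (f : overlap K H).

Definition sum_adj : rel (vert K + vert H)%type := fun x y =>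
  match x, y with
  | inl u, inl v => adj u v
  | inr u, inr v => adj u v
  | _, _ => false
  end.
Lemma sum_adj_sym : symmetric sum_adj.
Proof. by case=> u [] v //=; rewrite adj_sym. Qed.
Definition gsum : graph := @Graph (vert K + vert H)%type sum_adj sum_adj_sym.

(* representative: identifies inr w with inl v whenever (v,w) \in f *)
Definition grep (x : vert gsum) : vert gsum :=
  match x with
  | inl v => inl v
  | inr w => if [pick v | (v, w) \in ovl f] is Some v then inl v else inr w
  end.
Definition gpart : {set {set vert gsum}} := preim_partition grep [set: vert gsum].
Definition glue : graph := @quot gsum gpart.
Definition fK (v : vert K) : vert glue := @qmap gsum gpart (preim_partitionP grep [set: vert gsum]) (inl v).
Definition fH (w : vert H) : vert glue := @qmap gsum gpart (preim_partitionP grep [set: vert gsum]) (inr w).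
End Glue.

Definition fset_pairs := forall K : graph, word (vert K) -> Prop.

(* F is a set of equivalence classes: closed under (K,a) == (K', phi a) *)
Definition iso_closed (F : fset_pairs) : Prop :=
  forall (K K' : graph) (phi : vert K -> vert K'), giso phi ->
    forall a, F K a -> F K' (wmap phi a).

Definition F1 (F : fset_pairs) : Prop :=
  forall K, (forall a, ~ F K a) \/ normal_subgroup (F K).
Definition F2 (F : fset_pairs) : Prop :=
  forall K (phi : vert K -> vert K), gaut phi ->
    forall b, F K b <-> exists2 a, F K a & b = wmap phi a.
Definition F3 (F : fset_pairs) : Prop :=
  forall K H (f : overlap K H) a b, F K a -> F H b ->
    F (glue f) (wmul (wmap (@fK K H f) a) (wmap (@fH K H f) b)).

Definition graph_fibration (F : fset_pairs) : Prop :=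
  [/\ F (N_ 0) (wone _), F (N_ 1) (wone _), F1 F, F2 F & F3 F].

Definition full (F : fset_pairs) : Prop := forall K, exists a, F K a.

Definition easy (F : fset_pairs) : Prop :=
  forall K, (exists a, F K a) ->
    forall (P : {set {set vert K}}) (hP : partition P [set: vert K]) a,
      F K a -> F (quot P) (wmap (qmap hP) a).

From mathcomp Require Import all_boot.
Set Implicit Arguments. Unset Strict Implicit. Unset Printing Implicit Defensive.

(* If F(K) is always a normal subgroup closed under homomorphic images, the
   axioms hold because automorphisms, the gluing maps f_K, f_H and the quotient
   maps q_pi are homomorphisms. Conversely, fullness and (F1) make every F(K) a
   normal subgroup. Given a homomorphism phi : H -> K and a in F(H), gluing K
   and H along the empty overlap puts the copy of a in F(K ⊔ H), by (F3) with
   e in F(K). The map K ⊔ H -> K which is the identity on K and phi on H is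
   surjective on vertices and on edges, hence isomorphic to a quotient map;
   (F4) and isomorphism invariance then carry the copy of a to phi(a) in F(K). *)

Lemma pushK (V : eqType) (z : V) u : reducedw u -> push z (push z u) = u.
Proof.
case: u => [|y u] /=; first by rewrite eqxx.
case: eqP => [->|/eqP z_neq_y] u_red /=; last by rewrite eqxx.
by case: u u_red => [|w u] //= /andP[/negbTE ->].
Qed.

Lemma wmap_seq_push (V V' : eqType) (f : V -> V') y t :
  wmap_seq f (push y t) = push (f y) (wmap_seq f t).
Proof.
case: t => [|x t] //=; case: eqP => [<-|_] //=.
by rewrite pushK // wmap_seq_reduced.
Qed.

Lemma wmap_seq_id (V : eqType) (s : seq V) : reducedw s -> wmap_seq id s = s.
Proof.
elim: s => //= x s IHs s_red; rewrite IHs; last exact: path_sorted s_red.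
by case: s s_red {IHs} => [|y s] //= /andP[/negbTE ->].
Qed.

Lemma wmap_comp (U V W : eqType) (f : U -> V) (g : V -> W) a :
  wmap g (wmap f a) = wmap (fun x => g (f x)) a.
Proof.
apply: val_inj; case: a => s _ /=.
by elim: s => //= x s IHs; rewrite wmap_seq_push IHs.
Qed.

Lemma eq_wmap (V V' : eqType) (f g : V -> V') : f =1 g -> wmap f =1 wmap g.
Proof.
move=> eq_fg a; apply: val_inj; case: a => s _ /=.
by elim: s => //= x s ->; rewrite eq_fg.
Qed.

Lemma wmap_id (V : eqType) (a : word V) : wmap id a = a.
Proof. by apply: val_inj; case: a => s s_red /=; rewrite wmap_seq_id. Qed.

Lemma wmap_one (V V' : eqType) (f : V -> V') : wmap f (wone V) = wone V'.
Proof. exact: val_inj. Qed.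

Lemma wmap_to_empty (V V' : eqType) (f : V -> V') a :
  (V' -> False) -> wmap f a = wone V'.
Proof.
by move=> V'_empty; apply: val_inj; case: a => -[|x s] //= _; case: (V'_empty (f x)).
Qed.

Lemma mul1w (V : eqType) (a : word V) : wmul (wone V) a = a.
Proof. exact: val_inj. Qed.

Definition hom_closed (F : fset_pairs) : Prop :=
  forall (H K : graph) (phi : vert H -> vert K), ghom phi ->
    forall a, F H a -> F K (wmap phi a).

Definition quotient_hom (G K : graph) (g : vert G -> vert K) : Prop :=
  [/\ forall k, exists x, g x = k, ghom g &
      forall k k', adj k k' -> exists x y, [/\ g x = k, g y = k' & adj x y]].

Section QuotientMap.
Variables (K : graph) (P : {set {set vert K}}) (hP : partition P [set: vert K]).

Lemma mem_qmap x : x \in sval (qmap hP x).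
Proof. by rewrite /= mem_pblock; case/and3P: hP => /eqP -> _ _; rewrite inE. Qed.

Lemma block_qmap (B : vert (quot P)) x : x \in sval B -> qmap hP x = B.
Proof.
move=> xB; apply: val_inj; apply: def_pblock xB; last exact: svalP B.
by case/and3P: hP.
Qed.

Lemma quot_vertP (B : vert (quot P)) : exists2 x, x \in sval B & qmap hP x = B.
Proof.
have [x xB] : exists x, x \in sval B.
  case: B => B PB /=; apply/set0Pn; apply: contraTneq PB => ->.
  by case/and3P: hP.
by exists x => //; apply: block_qmap.
Qed.

Lemma qmap_hom : ghom (qmap hP).
Proof.
by move=> x y xy; apply/existsP; exists x; apply/existsP; exists y; rewrite !mem_qmap.
Qed.

End QuotientMap.

Section PreimQuotient.
Variables (G : graph) (T : eqType) (r : vert G -> T).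
Local Notation hP := (preim_partitionP r [set: vert G]).

Lemma mem_qmap_preim x y : (y \in sval (qmap hP x)) = (r x == r y).
Proof.
rewrite /= /preim_partition pblock_equivalence_partition ?inE //.
by move=> u v w _ _ _; split=> // /eqP ->.
Qed.

Lemma qmap_preim_eq x y : r x = r y -> qmap hP x = qmap hP y.
Proof. by move=> rxy; apply: block_qmap; rewrite mem_qmap_preim rxy. Qed.

Section Lift.
Variables (X : Type) (x0 : vert G) (h : vert G -> X).
Hypothesis h_fibres : forall x y, r x = r y -> h x = h y.

Definition preim_lift (B : vert (quot (preim_partition r [set: vert G]))) : X :=
  h (odflt x0 [pick x in sval B]).

Lemma preim_liftE x : preim_lift (qmap hP x) = h x.
Proof.
rewrite /preim_lift; case: pickP => [y|]; first by rewrite mem_qmap_preim => /eqP /h_fibres.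
by move/(_ x); rewrite mem_qmap.
Qed.

End Lift.

Lemma preim_lift_hom (K : graph) (x0 : vert G) (h : vert G -> vert K) :
  (forall x y, r x = r y -> h x = h y) -> ghom h -> ghom (preim_lift x0 h).
Proof.
move=> h_fibres h_hom B C /existsP[x /existsP[y /and3P[xB yC xy]]].
by rewrite -(block_qmap hP xB) -(block_qmap hP yC) !preim_liftE // h_hom.
Qed.

Lemma preim_lift_quotient_hom (K : graph) (x0 : vert G) (h : vert G -> vert K) :
  (forall x y, r x = r y -> h x = h y) -> quotient_hom h ->
  quotient_hom (preim_lift x0 h).
Proof.
move=> h_fibres [h_onto h_hom h_edges]; split.
- by move=> k; have [x <-] := h_onto k; exists (qmap hP x); rewrite preim_liftE.
- exact: preim_lift_hom.
- move=> k k' /h_edges[x [y [<- <- xy]]].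
  by exists (qmap hP x), (qmap hP y); rewrite !preim_liftE // qmap_hom.
Qed.

End PreimQuotient.

Arguments preim_lift {G T} r {X} x0 h.

Lemma preim_quot_iso (G K : graph) (g : vert G -> vert K) (x0 : vert G) :
  quotient_hom g -> giso (preim_lift g x0 g).
Proof.
move=> [g_onto g_hom g_edges].
pose hP := preim_partitionP g [set: vert G].
have liftE x : preim_lift g x0 g (qmap hP x) = g x by apply: preim_liftE.
split.
- pose inv k := qmap hP (odflt x0 [pick x | g x == k]).
  exists inv => [B|k].
    have [x _ <-] := quot_vertP hP B; rewrite liftE /inv.
    case: pickP => [y /eqP /qmap_preim_eq //|].
    by move/(_ x); rewrite eqxx.
  rewrite /inv; case: pickP => [y /eqP gy|]; first by rewrite liftE.
  by have [x gx] := g_onto k => /(_ x); rewrite gx eqxx.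
- move=> B C; apply/idP/idP; last exact: preim_lift_hom.
  have [x _ <-] := quot_vertP hP B; have [y _ <-] := quot_vertP hP C.
  rewrite !liftE => /g_edges[x' [y' [gx' gy' x'y']]].
  by apply/existsP; exists x'; apply/existsP; exists y'; rewrite !mem_qmap_preim gx' gy' !eqxx.
Qed.

Lemma easy_quotient_hom_closed (F : fset_pairs) : iso_closed F -> easy F ->
  forall (G K : graph) (g : vert G -> vert K) (x0 : vert G), quotient_hom g ->
  forall a, F G a -> F K (wmap g a).
Proof.
move=> F_iso F_easy G K g x0 g_quot a Fa.
have := F_easy G (ex_intro _ a Fa) _ (preim_partitionP g [set: vert G]) a Fa.
move/(F_iso _ _ _ (preim_quot_iso x0 g_quot)); rewrite wmap_comp.
by rewrite (eq_wmap (g := g)) // => x; apply: preim_liftE.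
Qed.

Definition disjoint_overlap (K H : graph) : overlap K H.
Proof. by exists set0 => p q; rewrite inE. Defined.

Lemma grep_disjoint (K H : graph) x : grep (disjoint_overlap K H) x = x.
Proof. by case: x => //= w; case: pickP => // v; rewrite inE. Qed.

Definition sum_fold (K H : graph) (phi : vert H -> vert K) (x : vert (gsum K H)) :
    vert K :=
  match x with inl k => k | inr w => phi w end.

Lemma sum_fold_quotient_hom (K H : graph) (phi : vert H -> vert K) :
  ghom phi -> quotient_hom (sum_fold phi).
Proof.
move=> phi_hom; split.
- by move=> k; exists (inl k).
- by case=> u [] v //=; apply: phi_hom.
- by move=> k k' kk'; exists (inl k), (inl k').
Qed.

Lemma F3_glue_right (F : fset_pairs) (K H : graph) (f : overlap K H) b :
  F3 F -> F K (wone _) -> F H b -> F (glue f) (wmap (fH f) b).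
Proof. by move=> F3F F_one Fb; have := F3F K H f _ _ F_one Fb; rewrite wmap_one mul1w. Qed.

Lemma full_F1_normal (F : fset_pairs) : full F -> F1 F -> forall K, normal_subgroup (F K).
Proof.
move=> F_full F1F K; case: (F1F K) => // F_empty.
by have [a /F_empty] := F_full K.
Qed.

Lemma easy_fibration_hom_closed (F : fset_pairs) :
  iso_closed F -> easy F -> F3 F -> (forall K, normal_subgroup (F K)) -> hom_closed F.
Proof.
move=> F_iso F_easy F3F F_normal H K phi phi_hom a Fa.
have F_one K' : F K' (wone _) by case: (F_normal K').
have [k0 _|K_empty] := pickP (@predT (vert K)); last first.
  by rewrite wmap_to_empty // => k; have := K_empty k.
pose f := disjoint_overlap K H.
have fold_fibres x y : grep f x = grep f y -> sum_fold phi x = sum_fold phi y.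
  by rewrite !grep_disjoint => ->.
pose g := preim_lift (grep f) (inl k0) (sum_fold phi).
have g_fH w : g (fH f w) = phi w by apply: (preim_liftE _ fold_fibres).
rewrite -(eq_wmap g_fH) -wmap_comp.
apply: (easy_quotient_hom_closed F_iso F_easy (fK f k0)); last exact: F3_glue_right.
exact: preim_lift_quotient_hom fold_fibres (sum_fold_quotient_hom phi_hom).
Qed.

Lemma hom_closed_F2 (F : fset_pairs) : hom_closed F -> F2 F.
Proof.
move=> F_hom K phi [[psi phiK psiK] phi_adj] b; split.
- move=> Fb; exists (wmap psi b); last by rewrite wmap_comp (eq_wmap psiK) wmap_id.
  by apply: F_hom Fb => x y xy; rewrite -phi_adj !psiK.
- by case=> a Fa ->; apply: F_hom Fa => x y; rewrite phi_adj.
Qed.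

Lemma fK_hom (K H : graph) (f : overlap K H) : ghom (fK f).
Proof. by move=> x y; exact: (@qmap_hom (gsum K H) _ _ (inl x) (inl y)). Qed.

Lemma fH_hom (K H : graph) (f : overlap K H) : ghom (fH f).
Proof. by move=> x y; exact: (@qmap_hom (gsum K H) _ _ (inr x) (inr y)). Qed.

Lemma hom_closed_F3 (F : fset_pairs) :
  (forall K, normal_subgroup (F K)) -> hom_closed F -> F3 F.
Proof.
move=> F_normal F_hom K H f a b Fa Fb; case: (F_normal (glue f)) => _ F_mul _ _.
by apply: F_mul; apply: F_hom; [exact: fK_hom | exact: Fa | exact: fH_hom | exact: Fb].
Qed.

Lemma hom_closed_easy (F : fset_pairs) : hom_closed F -> easy F.
Proof. by move=> F_hom K _ P hP a; apply: F_hom; apply: qmap_hom. Qed.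

Theorem proposition2p18 (F : forall K : graph, word (vert K) -> Prop) :
  iso_closed F ->
  ((graph_fibration F /\ full F /\ easy F) <->
   ((forall K : graph, normal_subgroup (F K)) /\
    (forall (H K : graph) (phi : vert H -> vert K), ghom phi ->
       forall a, F H a -> F K (wmap phi a)))).
Proof.
move=> F_iso; split.
  case=> -[_ _ F1F _ F3F] [F_full F_easy].
  have F_normal := full_F1_normal F_full F1F.
  by split=> //; apply: easy_fibration_hom_closed.
case=> F_normal F_hom.
have F_one K : F K (wone _) by case: (F_normal K).
split; last split.
- by split=> //; [move=> K; right | exact: hom_closed_F2 | exact: hom_closed_F3].
- by move=> K; exists (wone _).
- exact: hom_closed_easy.
Qed.
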